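(* Let $f:\mathbb{Z}\to\mathbb{R}$ be defined by $f(x)=\left|\sin\left(\frac{x+1}{100}\right)\right|$. Then $x=-1$ is the only global minimizer of $f$ on $\mathbb{Z}$; that is, $f(-1)=\min_{x\in\mathbb{Z}} f(x)$ and $f(x)>f(-1)$ for every integer $x\neq -1$. *)

From Stdlib Require Import Reals ZArith.
Open Scope R_scope.

Definition fsin (x : Z) : R := Rabs (sin ((IZR x + 1) / 100)).

(** Since [sin t = 0] only at integer multiples of [PI], [fsin x = 0] forces
    [(x + 1) / 100 = k PI] for an integer [k]; for [x <> -1] this makes [PI]
    rational, contradicting Niven's theorem (proved in MathComp-Analysis for
    its own [pi], which has to be identified with Stdlib's [PI]). *)

From Stdlib Require Import Reals ZArith Lra Lia.
From mathcomp Require Import all_boot all_order all_algebra.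
From mathcomp Require Import all_classical all_reals all_analysis.
From mathcomp Require Import Rstruct Rstruct_topology.
Import Order.TTheory GRing.Theory Num.Theory.

(* MathComp rebinds the key [%Z] to [int]; give it back to [Z]. Unqualified
   [sin] and [cos] now denote MathComp-Analysis's functions. *)
Delimit Scope Z_scope with Z.

Local Open Scope ring_scope.

(* Compare the defining power series, as for [RexpE]. *)
Lemma RcosE (x : R) : Rtrigo_def.cos x = cos x.
Proof.
apply/esym; rewrite /Rtrigo_def.cos; case: exist_cos => y.
rewrite /cos_in /infinite_sum /= => cos_ub.
suff cvg_y : (series (cos_coeff' x) @ \oo --> y)%classic.
  by apply: (cvg_unique _ (@cvg_cos_coeff' R x) cvg_y); exact: Rhausdorff.
rewrite -cvg_shiftS /=.
apply/(@pseudometric_normed_Zmodule.cvgrPdist_lt _ R^o) => /= e /RltP /cos_ub[N Nub].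
near=> n.
have nN : (n >= N)%coq_nat by apply/ssrnat.leP; near: n; exact: nbhs_infty_ge.
move: Nub => /(_ _ nN) /[!RdistE] /RltP /=.
rewrite distrC sum_f_R0E; congr (`| _ - _ | < e).
apply: eq_bigr => k _; rewrite /cos_n /cos_coeff'.
by rewrite !RpowE RdivE RmultE INRE factE /Rsqr RmultE -expr2 -exprM mulrAC -mul2n.
Unshelve. all: by end_near. Qed.

(* [PI / 2] and [pi / 2] are both the unique zero of the cosine in [[0, 2]]. *)
Lemma RPIE : PI = pi :> R.
Proof.
have PI2_bounds := PI2_1; have PI_bounds := PI_4.
have two_neq0 : 2 != 0 :> R by rewrite pnatr_eq0.
suff PI2E : PI / 2 = pi / 2 :> R by rewrite -[PI](divfK two_neq0) PI2E divfK.
have [pi2_02 cos_pi2] := @pihalf_02_cos_pihalf R.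
apply: cos_02_uniq => //.
- apply/andP; split; apply/RleP.
  + by change (0 <= PI / 2)%coqR; lra.
  + by change (PI / 2 <= 2)%coqR; lra.
- by rewrite -RcosE -RdivE; exact: cos_PI2.
Qed.

Lemma IZR_int (z : Z) : exists a : int, IZR z = a%:~R.
Proof.
case: z => [|p|p]; first by exists 0.
- by exists (Posz (nat_of_pos p)); rewrite IZRposE INRE.
- exists (- Posz (nat_of_pos p)).
  by rewrite -Pos2Z.opp_pos opp_IZR IZRposE INRE mulrNz.
Qed.

Local Close Scope ring_scope.
Local Open Scope R_scope.

Lemma PI_irrational (p q : Z) : q <> 0%Z -> PI * IZR q <> IZR p.
Proof.
move=> /not_0_IZR q0 Epq; apply: (@pi_irrationnal R).
have [a Ea] := IZR_int p; have [b Eb] := IZR_int q.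
exists (a%:~R / b%:~R)%R => //.
rewrite fmorph_div /= !ratr_int -Ea -Eb -RPIE -Epq.
by rewrite mulfK //; apply/eqP.
Qed.

Lemma sin_rational_neq0 (p q : Z) :
  p <> 0%Z -> q <> 0%Z -> Rtrigo_def.sin (IZR p / IZR q) <> 0.
Proof.
move=> p0 q0 /sin_eq_0_0 [k Epqk].
have k0 : k <> 0%Z.
  move=> k0; move: Epqk; rewrite k0 Rmult_0_l => /Rmult_integral [/eq_IZR //|].
  exact: Rinv_neq_0_compat (not_0_IZR _ q0).
apply: (PI_irrational p (q * k)); first lia.
have -> : IZR p = IZR q * (IZR p / IZR q) by field; exact: not_0_IZR.
by rewrite Epqk mult_IZR; ring.
Qed.

Theorem theorem1 :
  (forall x : Z, fsin (-1)%Z <= fsin x) /\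
  (forall x : Z, x <> (-1)%Z -> fsin (-1)%Z < fsin x).
Proof.
have fsin_m1 : fsin (-1)%Z = 0.
  rewrite /fsin (_ : (IZR (-1) + 1) / 100 = 0); last by field.
  by rewrite sin_0 Rabs_R0.
rewrite fsin_m1; split => x; first exact: Rabs_pos.
move=> x_neq; apply: Rabs_pos_lt.
have -> : IZR x + 1 = IZR (x + 1) by rewrite plus_IZR.
by apply: (sin_rational_neq0 (x + 1) 100); lia.
Qed.
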